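(* Let $\mathcal{A}$ be a finite alphabet and $\mathbf{p},\mathbf{q}$ standard pairs on $\mathcal{A}$ such that $\mathbf{p}$ is of Type $\langle2\rangle$ and $\mathbf{q}$ is of Type $\langle4\rangle$ or of Type $\langle5\rangle$. Then the non-labeled extended Rauzy classes of $\mathbf{p}$ and $\mathbf{q}$ are different.
   Context: Let $n=\#\mathcal{A}\ge2$. A pair is $\mathbf{p}=(p_0,p_1)$ with $p_0,p_1:\mathcal{A}\to\{1,\dots,n\}$ bijections. Irreducible: $p_0^{-1}\{1,\dots,k\}\ne p_1^{-1}\{1,\dots,k\}$ for $1\le k<n$. Rauzy move of type $\varepsilon$: $\varepsilon\mathbf{p}=(p'_0,p'_1)$, $p'_\varepsilon=p_\varepsilon$, and for $z=p_\varepsilon^{-1}(n)$, $p'_{1-\varepsilon}(b)=p_{1-\varepsilon}(b)$ if $p_{1-\varepsilon}(b)\le p_{1-\varepsilon}(z)$, $=p_{1-\varepsilon}(b)+1$ if $p_{1-\varepsilon}(z)<p_{1-\varepsilon}(b)<n$, $=p_{1-\varepsilon}(z)+1$ if $p_{1-\varepsilon}(b)=n$. Left Rauzy move of type $\varepsilon$: $\tilde\varepsilon\mathbf{p}=(p'_0,p'_1)$, $p'_\varepsilon=p_\varepsilon$, and for $a=p_\varepsilon^{-1}(1)$, $p'_{1-\varepsilon}(b)=p_{1-\varepsilon}(a)-1$ if $p_{1-\varepsilon}(b)=1$, $=p_{1-\varepsilon}(b)-1$ if $1<p_{1-\varepsilon}(b)<p_{1-\varepsilon}(a)$, unchanged otherwise.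 The labeled extended Rauzy class of $\mathbf{p}$ is the set of pairs reachable from $\mathbf{p}$ by Rauzy and left Rauzy moves of both types; the non-labeled extended Rauzy class is its image under $(p_0,p_1)\mapsto p_1\circ p_0^{-1}\in\mathfrak{S}_n$. Standard: $p_0^{-1}(1)=p_1^{-1}(n)$ and $p_1^{-1}(1)=p_0^{-1}(n)$. A standard pair is piece-wise order reversing if there are $2=k_0<\dots<k_\ell=n$ with $B_i=p_0^{-1}\{k_{i-1},\dots,k_i-1\}=p_1^{-1}\{k_{i-1},\dots,k_i-1\}$ and $p_0(b)+p_1(b)=k_{i-1}+k_i-1$ for $b\in B_i$; the $B_i$ are blocks ($k$-block: $k$ letters). Chains: with the $1$-blocks $S_1,\dots,S_{k-1}$ listed left to right, chain $C_i$ is the possibly empty sequence of consecutive blocks strictly between $S_{i-1}$ and $S_i$ ($C_1$ before $S_1$, $C_k$ after $S_{k-1}$). Types (defined only for piece-wise order reversing pairs, and requiring more than one block of size $\ge2$): Type $\langle2\rangle$: all nonempty chains consist of $2$-blocks; Type $\langle4\rangle$: exactly one chain consists of a $4$-block followed by $m\ge0$ consecutive $2$-blocks and all other nonempty chains consist of $2$-blocks; Type $\langle5\rangle$: exactly one chain consists of a single $5$-block and every other nonempty chain consists of exactly one $2$-block. *)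

From mathcomp Require Import all_boot.
Set Implicit Arguments. Unset Strict Implicit. Unset Printing Implicit Defensive.

(* Conventions: a pair on the finite alphabet A is encoded as two functions
   A -> nat; it is a pair when each is a bijection onto {1,...,n}, n = #|A|.
   Component eps : bool is p0 for false, p1 for true. *)

Section Rauzy.
Variable A : finType.

Definition pr := ((A -> nat) * (A -> nat))%type.

Definition nA := #|A|.

Definition is_bij (f : A -> nat) : Prop :=
  injective f /\ forall a, 1 <= f a <= nA.

Definition is_pair (p : pr) : Prop := is_bij p.1 /\ is_bij p.2.

Definition irreducible (p : pr) : Prop :=
  forall k, 1 <= k < nA ->
    [set a | p.1 a <= k] != [set a | p.2 a <= k].

Definition comp (p : pr) (eps : bool) : A -> nat := if eps then p.2 else p.1.

Definition mkpr (eps : bool) (pe po : A -> nat) : pr :=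
  if eps then (po, pe) else (pe, po).

(* inverse image of value k under f (meaningful when f is a bijection) *)
Definition preim (f : A -> nat) (k : nat) : option A := [pick a | f a == k].

Definition rauzy (eps : bool) (p : pr) : pr :=
  let pe := comp p eps in
  let po := comp p (~~ eps) in
  match preim pe nA with
  | None => p
  | Some z =>
      mkpr eps pe (fun b =>
        if po b <= po z then po b
        else if po b < nA then (po b).+1
        else if po b == nA then (po z).+1
        else po b)
  end.

Definition lrauzy (eps : bool) (p : pr) : pr :=
  let pe := comp p eps in
  let po := comp p (~~ eps) in
  match preim pe 1 with
  | None => p
  | Some a =>
      mkpr eps pe (fun b =>
        if po b == 1 then (po a).-1
        else if 1 < po b < po a then (po b).-1
        else po b)
  end.

Definition rstep (p q : pr) : Prop :=
  exists eps : bool, q = rauzy eps p \/ q = lrauzy eps p.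

(* reflexive-transitive closure: the labeled extended Rauzy class of p
   is [set q | reach p q] *)
Inductive reach (p : pr) : pr -> Prop :=
  | reach_refl : reach p p
  | reach_step q r : reach p q -> rstep q r -> reach p r.

(* the permutation p1 o p0^{-1} in S_n, encoded as its one-line notation
   [:: p1(p0^{-1} 1); ...; p1(p0^{-1} n)] *)
Definition perm_of (p : pr) : seq nat :=
  [seq (match preim p.1 k with Some a => p.2 a | None => 0 end)
   | k <- iota 1 nA].

Definition nl_class (p : pr) (s : seq nat) : Prop :=
  exists q, reach p q /\ perm_of q = s.

Definition standard (p : pr) : Prop :=
  (exists a, p.1 a = 1 /\ p.2 a = nA) /\ (exists b, p.2 b = 1 /\ p.1 b = nA).

Definition pwor_wrt (p : pr) (ks : seq nat) : Prop :=
  [/\ head 0 ks = 2, last 0 ks = nA, sorted ltn ks &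
      forall i, i.+1 < size ks ->
        let lo := nth 0 ks i in let hi := nth 0 ks i.+1 in
        forall b,
          ((lo <= p.1 b < hi) = (lo <= p.2 b < hi)) /\
          (lo <= p.1 b < hi -> p.1 b + p.2 b = lo + hi - 1)].

End Rauzy.

Definition block_sizes (ks : seq nat) : seq nat :=
  [seq nth 0 ks i.+1 - nth 0 ks i | i <- iota 0 (size ks).-1].

(* chains: split the list of block sizes at the 1-blocks;
   with k-1 one-blocks we get exactly k (possibly empty) chains C_1..C_k *)
Fixpoint chains (sz : seq nat) : seq (seq nat) :=
  match sz with
  | [::] => [:: [::]]
  | x :: s => if x == 1 then [::] :: chains s
              else match chains s with
                   | c :: cs => (x :: c) :: cs
                   | [::] => [:: [:: x]]
                   end
  end.

Definition all2blocks (c : seq nat) : bool := all (fun x => x == 2) c.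

Definition many_big (sz : seq nat) : Prop := 1 < count (fun x => 2 <= x) sz.

Definition type2_sz (sz : seq nat) : Prop :=
  many_big sz /\ all all2blocks (chains sz).

Definition type4_sz (sz : seq nat) : Prop :=
  many_big sz /\
  exists i, i < size (chains sz) /\
    (exists m, nth [::] (chains sz) i = 4 :: nseq m 2) /\
    (forall j, j < size (chains sz) -> j != i ->
       all2blocks (nth [::] (chains sz) j)).

Definition type5_sz (sz : seq nat) : Prop :=
  many_big sz /\
  exists i, i < size (chains sz) /\
    nth [::] (chains sz) i = [:: 5] /\
    (forall j, j < size (chains sz) -> j != i ->
       let c := nth [::] (chains sz) j in c = [::] \/ c = [:: 2]).

Definition type2 (A : finType) (p : pr A) : Prop :=
  exists ks, pwor_wrt p ks /\ type2_sz (block_sizes ks).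
Definition type4 (A : finType) (p : pr A) : Prop :=
  exists ks, pwor_wrt p ks /\ type4_sz (block_sizes ks).
Definition type5 (A : finType) (p : pr A) : Prop :=
  exists ks, pwor_wrt p ks /\ type5_sz (block_sizes ks).

(* To a pair p attach the quadratic form X |-> #|X| + (number of crossing pairs
   of letters in X) on GF(2)^A and the sum [arf p] of its signs, which
   determines its Arf invariant.  The sum only depends on p1 o p0^-1, and a
   (left) Rauzy move changes the form by a transvection X |-> X + [d \in X] z,
   so it is constant on extended Rauzy classes.  For a standard piece-wise
   order reversing pair the two extreme letters cross every other letter,
   letters of different blocks do not cross and each block is a clique, so
   the sum is -2 times the product of the clique sums U(k) over the block
   sizes k, where U(k) = sum_j C(k,j) (-1)^C(j,2) equals 2, 2, 0, -4, -8 for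
   k = 1, ..., 5.  It is therefore negative for Type <2> and positive for
   Types <4> and <5>. *)

From Pilot Require Import Defs.
From mathcomp Require Import all_boot all_algebra zify ring.
Set Implicit Arguments. Unset Strict Implicit. Unset Printing Implicit Defensive.
Import GRing.Theory Num.Theory.

Lemma setU1_ind (T : finType) (P : {set T} -> Prop) :
  P set0 -> (forall z (X : {set T}), z \notin X -> P X -> P (z |: X)) ->
  forall X, P X.
Proof.
move=> P0 PU1 X; elim: {X}_.+1 {-2}X (ltnSn #|X|) => // n IH X.
case: (set_0Vmem X) => [-> //|[z zX]]; rewrite ltnS => Xn.
rewrite -(setD1K zX); apply: PU1; first by rewrite setD11.
by apply: IH; move: Xn; rewrite (cardsD1 z X) zX.
Qed.

Section Crossings.
Variable A : finType.
Implicit Types (p : pr A) (X : {set A}).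

Definition crossing p a b := (p.1 a < p.1 b) && (p.2 b < p.2 a).
Definition crosses p a b := crossing p a b || crossing p b a.
Definition ncross p X := \sum_(a in X) \sum_(b in X) crossing p a b.

Definition arf p : int := (\sum_(X : {set A}) (-1) ^+ (#|X| + ncross p X))%R.

Lemma crossingxx p a : crossing p a a = false.
Proof. by rewrite /crossing ltnn. Qed.

Lemma crossesxx p a : crosses p a a = false.
Proof. by rewrite /crosses crossingxx. Qed.

Lemma crossesC p a b : crosses p a b = crosses p b a.
Proof. by rewrite /crosses orbC. Qed.

Lemma crossesE p a b : (crosses p a b : nat) = crossing p a b + crossing p b a.
Proof.
rewrite /crosses /crossing.
by case: ltngtP => //= _; case: ltngtP.
Qed.

Lemma ncross0 p : ncross p set0 = 0.
Proof. by rewrite /ncross big_set0. Qed.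

Lemma ncrossU1 p z X : z \notin X ->
  ncross p (z |: X) = ncross p X + \sum_(b in X) crosses p z b.
Proof.
move=> zX; rewrite /ncross big_setU1 //= big_setU1 //= crossingxx add0n.
under [X in _ + X = _]eq_bigr => a _ do rewrite big_setU1 //=.
rewrite big_split /=.
have -> : \sum_(b in X) crosses p z b =
          \sum_(b in X) crossing p z b + \sum_(b in X) crossing p b z.
  by rewrite -big_split; apply: eq_bigr => b _; rewrite crossesE.
lia.
Qed.

Lemma ncrossD1 p X d : d \in X ->
  ncross p X = ncross p (X :\ d) + \sum_(b in X :\ d) crosses p d b.
Proof. by move=> dX; rewrite -{1}(setD1K dX) ncrossU1 // setD11. Qed.

Lemma eq_ncross p q X : {in X &, crosses q =2 crosses p} ->
  ncross q X = ncross p X.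
Proof.
elim/setU1_ind: X => [|z X zX IH] eqX; first by rewrite !ncross0.
have eqX' : {in X &, crosses q =2 crosses p}.
  by move=> a b aX bX; apply: eqX; rewrite in_setU1 ?aX ?bX orbT.
rewrite !ncrossU1 // IH //; congr (_ + _); apply: eq_bigr => b bX.
by rewrite eqX ?setU11 // in_setU1 bX orbT.
Qed.

Lemma sum_addb (X : {set A}) (f g : A -> bool) :
  \sum_(b in X) (f b (+) g b : nat) + 2 * \sum_(b in X) (f b && g b : nat)
  = \sum_(b in X) (f b : nat) + \sum_(b in X) (g b : nat).
Proof.
rewrite big_distrr /= -!big_split /=; apply: eq_bigr => b _.
by case: (f b); case: (g b).
Qed.

Definition toggle (z : A) X := if z \in X then X :\ z else z |: X.
Definition transvection (z d : A) X := if d \in X then toggle z X else X.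

Lemma toggleK z : involutive (toggle z).
Proof.
move=> X; rewrite /toggle; case: (boolP (z \in X)) => zX.
  by rewrite setD11 setD1K.
by rewrite setU11 setU1K.
Qed.

Lemma transvectionK z d : z != d -> involutive (transvection z d).
Proof.
move=> zd X; rewrite /transvection; case: (boolP (d \in X)) => dX; last first.
  by rewrite (negbTE dX).
suff -> : d \in toggle z X by apply: toggleK.
rewrite /toggle; case: ifP => _; first by rewrite in_setD1 eq_sym zd dX.
by rewrite in_setU1 dX orbT.
Qed.

Section Transvection.
Variables (p q : pr A) (z d : A).
Hypothesis zd : z != d.
Hypothesis crosses_off_d :
  forall u v, u != d -> v != d -> crosses q u v = crosses p u v.
Hypothesis crosses_d : forall v, v != d -> crosses q d v = crosses p d v (+) crosses p z v.
Hypothesis crosses_zd : crosses p z d.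

Lemma odd_transvection X :
  odd (#|X| + ncross q X) = odd (#|transvection z d X| + ncross p (transvection z d X)).
Proof.
have odd_eq_mod2 m n : m %% 2 = n %% 2 -> odd m = odd n.
  by rewrite !modn2; case: (odd m); case: (odd n).
rewrite /transvection; case: ifP => dX; last first.
  congr (odd (_ + _)); apply: eq_ncross => a b aX bX; apply: crosses_off_d.
    by apply: contraFneq dX => <-.
  by apply: contraFneq dX => <-.
have ncross_Xd : ncross q (X :\ d) = ncross p (X :\ d).
  apply: eq_ncross => a b; rewrite !in_setD1 => /andP[ad _] /andP[bd _].
  exact: crosses_off_d.
have sum_Xd : \sum_(b in X :\ d) crosses q d b =
          \sum_(b in X :\ d) (crosses p d b (+) crosses p z b).
  by apply: eq_bigr => b; rewrite in_setD1 => /andP[bd _]; rewrite crosses_d // eq_sym.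
rewrite (ncrossD1 q dX) ncross_Xd sum_Xd.
have := sum_addb (X :\ d) (crosses p d) (crosses p z).
rewrite /toggle; case: ifP => zX.
- have zXd : z \in X :\ d by rewrite in_setD1 zX andbT.
  rewrite (ncrossD1 p zXd) (big_setD1 _ zXd) /= crossesxx crossesC crosses_zd /=.
  have dXz : d \in X :\ z by rewrite in_setD1 dX andbT eq_sym zd.
  rewrite (ncrossD1 p dXz) [(X :\ z) :\ d]setDDl setUC -setDDl.
  have := sum_addb ((X :\ d) :\ z) (crosses p d) (crosses p z).
  have : #|X| = (#|X :\ z|).+1 by rewrite (cardsD1 z X) zX.
  move=> ? ? ?; apply: odd_eq_mod2; lia.
- have zXd : z \notin d |: (X :\ d) by rewrite in_setU1 in_setD1 zX andbF orbF.
  rewrite (setD1K dX) in zXd.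
  have card_zX : #|z |: X| = #|X|.+1 by rewrite cardsU1 zXd.
  rewrite ncrossU1 // (big_setD1 _ dX) /= crosses_zd (ncrossD1 p dX) card_zX.
  change (nat_of_bool true) with 1.
  move=> ?; apply: odd_eq_mod2; lia.
Qed.

Lemma arf_transvection : arf q = arf p.
Proof.
have tK := transvectionK zd.
rewrite /arf (reindex_inj (can_inj tK)) /=.
by apply: eq_bigr => X _; rewrite -signr_odd odd_transvection tK signr_odd.
Qed.

End Transvection.
End Crossings.

(* A Rauzy move (resp. left Rauzy move) of type 0 replaces p.2 by
   rshift n c \o p.2 (resp. lshift c \o p.2), where c = p.2 z for the letter z
   with p.1 z = n (resp. p.1 z = 1). *)
Definition rshift (n c v : nat) :=
  if v <= c then v else if v < n then v.+1 else if v == n then c.+1 else v.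
Definition lshift (c v : nat) := if v == 1 then c.-1 else if 1 < v < c then v.-1 else v.

Lemma rshift_mono n c x y : x < n -> y < n -> (rshift n c x < rshift n c y) = (x < y).
Proof. by rewrite /rshift; do !case: ifP; lia. Qed.

Lemma rshift_range n c v : c < n -> 1 <= v <= n -> 1 <= rshift n c v <= n.
Proof. by rewrite /rshift; do !case: ifP; lia. Qed.

Lemma rshift_inj n c : c < n -> {in [pred v | 1 <= v <= n] &, injective (rshift n c)}.
Proof. move=> cn x y /=; rewrite !inE /rshift; do !case: ifP; lia. Qed.

Lemma rshift_le n c v k : k < c -> (rshift n c v <= k) = (v <= k).
Proof. by rewrite /rshift; do !case: ifP; lia. Qed.

(* With a1 = p.1 d, b1 = p.1 v, x = p.2 v, where d has the extreme p.2-position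
   (n here, 1 in lshift_crosses_bot): crosses d v after the move equals
   crosses d v xor crosses z v before it. *)
Lemma rshift_crosses_top n c a1 b1 x :
  c < n -> x < n -> b1 <= n -> a1 < n -> a1 != b1 -> (b1 == n) = (x == c) ->
  ((a1 < b1) && (rshift n c x < rshift n c n) || (b1 < a1) && (rshift n c n < rshift n c x)) =
  ((a1 < b1) && (x < n) || (b1 < a1) && (n < x)) (+)
  ((n < b1) && (x < c) || (b1 < n) && (c < x)).
Proof. by rewrite /rshift; do !case: ifP; lia. Qed.

Lemma lshift_mono c x y : 2 <= x -> 2 <= y -> (lshift c x < lshift c y) = (x < y).
Proof. by rewrite /lshift; do !case: ifP; lia. Qed.

Lemma lshift_range n c v : 2 <= c <= n -> 1 <= v <= n -> 1 <= lshift c v <= n.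
Proof. by rewrite /lshift; do !case: ifP; lia. Qed.

Lemma lshift_inj n c : 2 <= c <= n -> {in [pred v | 1 <= v <= n] &, injective (lshift c)}.
Proof. move=> cn x y /=; rewrite !inE /lshift; do !case: ifP; lia. Qed.

Lemma lshift_le c v k : 2 <= c <= k -> (lshift c v <= k) = (v <= k).
Proof. by rewrite /lshift; do !case: ifP; lia. Qed.

Lemma lshift_crosses_bot c a1 b1 x :
  2 <= c -> 2 <= x -> 1 <= b1 -> 1 <= a1 -> a1 != b1 -> (b1 == 1) = (x == c) ->
  ((a1 < b1) && (lshift c x < lshift c 1) || (b1 < a1) && (lshift c 1 < lshift c x)) =
  ((a1 < b1) && (x < 1) || (b1 < a1) && (1 < x)) (+)
  ((1 < b1) && (x < c) || (b1 < 1) && (c < x)).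
Proof. by rewrite /lshift /=; do !case: ifP; lia. Qed.

Section Moves.
Variable A : finType.
Implicit Types (p : pr A).

Local Notation n := (nA A).

Lemma is_bij_surj (f : A -> nat) k : is_bij f -> 1 <= k <= n -> exists a, f a = k.
Proof.
case=> f_inj f_range k_range.
have U : uniq (map f (enum A)) by rewrite map_inj_uniq ?enum_uniq.
have S : {subset map f (enum A) <= iota 1 n}.
  by move=> x /mapP[a _ ->]; rewrite mem_iota; have := f_range a; lia.
have [_ E] := uniq_min_size U S ltac:(by rewrite size_iota size_map -cardE).
have : k \in iota 1 n by rewrite mem_iota; lia.
by rewrite -E => /mapP[a _ ->]; exists a.
Qed.

Lemma preim_bij (f : A -> nat) a : is_bij f -> Defs.preim f (f a) = Some a.
Proof.
case=> f_inj _; rewrite /Defs.preim; case: pickP => [b /eqP/f_inj -> //|].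
by move/(_ a); rewrite eqxx.
Qed.

Definition irr_pair p := is_pair p /\ irreducible p.

Lemma standard_irreducible p : standard p -> irreducible p.
Proof.
move=> [[a [top_a bot_a]] _] k k_range.
by apply/eqP => /setP /(_ a); rewrite !inE top_a bot_a; lia.
Qed.

Lemma irreducible_top p a : is_pair p -> irreducible p -> 2 <= n ->
  p.1 a = n -> p.2 a != n.
Proof.
move=> [[i1 r1] [i2 r2]] irr n2 top_a; apply/eqP => bot_a.
have /eqP := irr n.-1 ltac:(lia); apply; apply/setP => b; rewrite !inE.
case: (eqVneq b a) => [->|ba]; first by rewrite top_a bot_a; lia.
have := r1 b; have := r2 b.
have : p.1 b != p.1 a by rewrite (inj_eq i1).
have : p.2 b != p.2 a by rewrite (inj_eq i2).
rewrite top_a bot_a; lia.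
Qed.

Lemma irreducible_bot p a : is_pair p -> irreducible p -> 2 <= n ->
  p.1 a = 1 -> p.2 a != 1.
Proof.
move=> [[i1 r1] [i2 r2]] irr n2 top_a; apply/eqP => bot_a.
have /eqP := irr 1 ltac:(lia); apply; apply/setP => b; rewrite !inE.
case: (eqVneq b a) => [->|ba]; first by rewrite top_a bot_a.
have := r1 b; have := r2 b.
have : p.1 b != p.1 a by rewrite (inj_eq i1).
have : p.2 b != p.2 a by rewrite (inj_eq i2).
rewrite top_a bot_a; lia.
Qed.

Section RightMove.
Variables (p : pr A) (z d : A).
Hypotheses (n2 : 2 <= n) (pair_p : is_pair p) (irr_p : irreducible p).
Hypotheses (top_z : p.1 z = n) (bot_d : p.2 d = n).

Local Notation c := (p.2 z).
Local Notation q := (p.1, fun b => rshift n c (p.2 b)).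

Lemma rauzy0E : rauzy false p = q.
Proof.
have Pz : Defs.preim p.1 n = Some z by rewrite -top_z preim_bij //; case: pair_p.
by rewrite /rauzy /= Pz.
Qed.

Lemma rauzy0_top_neq_bot : z != d.
Proof.
by apply/eqP => zd; have := irreducible_top pair_p irr_p n2 top_z; rewrite zd bot_d eqxx.
Qed.

Lemma rauzy0_c_lt_n : c < n.
Proof.
case: pair_p => _ [i2 r2]; have := r2 z.
have : p.2 z != p.2 d by rewrite (inj_eq i2) rauzy0_top_neq_bot.
rewrite bot_d; lia.
Qed.

Lemma rauzy0_irr_pair : irr_pair q.
Proof.
have [[i1 r1] [i2 r2]] := pair_p; have cn := rauzy0_c_lt_n.
split; first split => //; first split.
- by move=> a b /= /(rshift_inj cn) E; apply/i2/E; rewrite inE.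
- by move=> a /=; apply: rshift_range.
move=> k k_range /=; case: (leqP c k) => ck.
  by apply/eqP => /setP /(_ z); rewrite !inE top_z /rshift leqnn ck; lia.
suff -> : [set a | rshift n c (p.2 a) <= k] = [set a | p.2 a <= k] by exact: irr_p.
by apply/setP => a; rewrite !inE rshift_le.
Qed.

Lemma arf_rauzy0 : arf q = arf p.
Proof.
have [[i1 r1] [i2 r2]] := pair_p; have cn := rauzy0_c_lt_n.
have zd := rauzy0_top_neq_bot.
apply: (arf_transvection zd).
- move=> u v ud vd.
  have : p.2 u != p.2 d by rewrite (inj_eq i2).
  have : p.2 v != p.2 d by rewrite (inj_eq i2).
  have := r2 u; have := r2 v; rewrite bot_d => ? ? ? ?.
  by rewrite /crosses /crossing /= !rshift_mono //; lia.
- move=> v vd.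
  have : p.2 v != p.2 d by rewrite (inj_eq i2).
  have : p.1 v != p.1 d by rewrite (inj_eq i1).
  have : (p.1 v == p.1 z) = (p.2 v == c) by rewrite (inj_eq i1) (inj_eq i2).
  have := r2 v; have := r1 v; have := r1 d.
  have : p.1 d != p.1 z by rewrite (inj_eq i1) eq_sym.
  rewrite /crosses /crossing /= bot_d top_z => ? ? ? ? E ? ?.
  by apply: rshift_crosses_top => //; lia.
- have := r1 d; have : p.1 d != p.1 z by rewrite (inj_eq i1) eq_sym.
  rewrite /crosses /crossing bot_d top_z => ? ?.
  by apply/orP; right; apply/andP; split; lia.
Qed.

End RightMove.

Section LeftMove.
Variables (p : pr A) (a d : A).
Hypotheses (n2 : 2 <= n) (pair_p : is_pair p) (irr_p : irreducible p).
Hypotheses (top_a : p.1 a = 1) (bot_d : p.2 d = 1).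

Local Notation c := (p.2 a).
Local Notation q := (p.1, fun b => lshift c (p.2 b)).

Lemma lrauzy0E : lrauzy false p = q.
Proof.
have Pa : Defs.preim p.1 1 = Some a by rewrite -top_a preim_bij //; case: pair_p.
by rewrite /lrauzy /= Pa.
Qed.

Lemma lrauzy0_top_neq_bot : a != d.
Proof.
by apply/eqP => ad; have := irreducible_bot pair_p irr_p n2 top_a; rewrite ad bot_d eqxx.
Qed.

Lemma lrauzy0_c_range : 2 <= c <= n.
Proof.
case: pair_p => _ [i2 r2]; have := r2 a.
have : p.2 a != p.2 d by rewrite (inj_eq i2) lrauzy0_top_neq_bot.
rewrite bot_d; lia.
Qed.

Lemma lrauzy0_irr_pair : irr_pair q.
Proof.
have [[i1 r1] [i2 r2]] := pair_p; have c_range := lrauzy0_c_range.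
split; first split => //; first split.
- by move=> b b' /= /(lshift_inj c_range) E; apply/i2/E; rewrite inE.
- by move=> b /=; apply: lshift_range.
move=> k k_range /=; case: (ltnP k c) => ck.
  by apply/eqP => /setP /(_ a); rewrite !inE top_a /lshift; do !case: ifP; lia.
suff -> : [set b | lshift c (p.2 b) <= k] = [set b | p.2 b <= k] by exact: irr_p.
by apply/setP => b; rewrite !inE lshift_le //; lia.
Qed.

Lemma arf_lrauzy0 : arf q = arf p.
Proof.
have [[i1 r1] [i2 r2]] := pair_p; have c_range := lrauzy0_c_range.
have ad := lrauzy0_top_neq_bot.
apply: (arf_transvection ad).
- move=> u v ud vd.
  have : p.2 u != p.2 d by rewrite (inj_eq i2).
  have : p.2 v != p.2 d by rewrite (inj_eq i2).
  have := r2 u; have := r2 v; rewrite bot_d => ? ? ? ?.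
  by rewrite /crosses /crossing /= !lshift_mono //; lia.
- move=> v vd.
  have : p.2 v != p.2 d by rewrite (inj_eq i2).
  have : p.1 v != p.1 d by rewrite (inj_eq i1).
  have : (p.1 v == p.1 a) = (p.2 v == c) by rewrite (inj_eq i1) (inj_eq i2).
  have := r2 v; have := r1 v; have := r1 d.
  rewrite /crosses /crossing /= bot_d top_a => ? ? ? E ? ?.
  by apply: lshift_crosses_bot => //; lia.
- have := r1 d; have : p.1 d != p.1 a by rewrite (inj_eq i1) eq_sym.
  rewrite /crosses /crossing bot_d top_a => ? ?.
  by apply/orP; left; apply/andP; split; lia.
Qed.

End LeftMove.

Definition swap_pr p : pr A := (p.2, p.1).

Lemma arf_swap p : arf (swap_pr p) = arf p.
Proof.
rewrite /arf; apply: eq_bigr => X _; congr (_ ^+ (_ + _))%R; rewrite /ncross.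
rewrite exchange_big /=; apply: eq_bigr => a _; apply: eq_bigr => b _.
by rewrite /crossing /= andbC.
Qed.

Lemma irr_pair_swap p : irr_pair p -> irr_pair (swap_pr p).
Proof. by case=> [[? ?] irr]; split=> // k k_range; rewrite eq_sym; apply: irr. Qed.

Lemma rauzy1E p : rauzy true p = swap_pr (rauzy false (swap_pr p)).
Proof. by case: p => p1 p2; rewrite /rauzy /=; case: (Defs.preim p2 _). Qed.

Lemma lrauzy1E p : lrauzy true p = swap_pr (lrauzy false (swap_pr p)).
Proof. by case: p => p1 p2; rewrite /lrauzy /=; case: (Defs.preim p2 _). Qed.

Hypothesis n2 : 2 <= n.

Lemma rauzy0_irr_arf p : irr_pair p -> irr_pair (rauzy false p) /\ arf (rauzy false p) = arf p.
Proof.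
case=> [[[i1 r1] [i2 r2]] irr].
have [z top_z] := is_bij_surj (conj i1 r1) (k := n) ltac:(lia).
have [d bot_d] := is_bij_surj (conj i2 r2) (k := n) ltac:(lia).
have pair_p : is_pair p by split; split.
rewrite (rauzy0E pair_p top_z).
by split; [apply: rauzy0_irr_pair bot_d | apply: arf_rauzy0 bot_d].
Qed.

Lemma lrauzy0_irr_arf p :
  irr_pair p -> irr_pair (lrauzy false p) /\ arf (lrauzy false p) = arf p.
Proof.
case=> [[[i1 r1] [i2 r2]] irr].
have [a top_a] := is_bij_surj (conj i1 r1) (k := 1) ltac:(lia).
have [d bot_d] := is_bij_surj (conj i2 r2) (k := 1) ltac:(lia).
have pair_p : is_pair p by split; split.
rewrite (lrauzy0E pair_p top_a).
by split; [apply: lrauzy0_irr_pair bot_d | apply: arf_lrauzy0 bot_d].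
Qed.

Lemma rstep_irr_arf p r : irr_pair p -> rstep p r -> irr_pair r /\ arf r = arf p.
Proof.
move=> irr_p [[] [->|->]]; last 2 first.
- exact: rauzy0_irr_arf.
- exact: lrauzy0_irr_arf.
- rewrite rauzy1E; have [irr_r arf_r] := rauzy0_irr_arf (irr_pair_swap irr_p).
  by split; [apply: irr_pair_swap | rewrite arf_swap arf_r arf_swap].
- rewrite lrauzy1E; have [irr_r arf_r] := lrauzy0_irr_arf (irr_pair_swap irr_p).
  by split; [apply: irr_pair_swap | rewrite arf_swap arf_r arf_swap].
Qed.

Lemma reach_irr_arf p r : irr_pair p -> reach p r -> irr_pair r /\ arf r = arf p.
Proof.
move=> irr_p; elim=> [//|q r' _ [irr_q <-]]; exact: rstep_irr_arf.
Qed.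

End Moves.

Section Relabeling.
Variable A : finType.
Implicit Types (p r : pr A).

Lemma nth_perm_of p a : is_pair p -> nth 0 (perm_of p) (p.1 a).-1 = p.2 a.
Proof.
case=> [[i1 r1] _]; have := r1 a => ra.
rewrite /perm_of (nth_map 0) ?size_iota; last lia.
by rewrite nth_iota; last lia; rewrite add1n prednK ?preim_bij //; lia.
Qed.

Lemma arf_perm_of p r : is_pair p -> is_pair r -> perm_of r = perm_of p -> arf r = arf p.
Proof.
move=> pair_p pair_r E.
have [[i1 r1] _] := pair_p; have [[j1 s1] _] := pair_r.
have [g g1] : {g : A -> A | forall a, r.1 (g a) = p.1 a}.
  by exists (fun a => odflt a (Defs.preim r.1 (p.1 a))) => a;
    have [b <-] := is_bij_surj (conj j1 s1) (r1 a); rewrite preim_bij.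
have g2 a : r.2 (g a) = p.2 a by rewrite -(nth_perm_of _ pair_r) g1 E nth_perm_of.
have g_inj : injective g by move=> a b Eab; apply: i1; rewrite -!g1 Eab.
rewrite /arf (reindex_inj (imset_inj g_inj)) /=.
apply: eq_bigr => X _; rewrite (card_imset _ g_inj) /ncross big_imset /=; last first.
  by move=> ? ? _ _; apply: g_inj.
congr (_ ^+ (_ + _))%R; apply: eq_bigr => a _; rewrite big_imset /=; last first.
  by move=> ? ? _ _; apply: g_inj.
by apply: eq_bigr => b _; rewrite /crossing !g1 !g2.
Qed.

End Relabeling.

Section SubsetSums.
Variable T : finType.
Implicit Types (S B Y : {set T}).
Local Open Scope ring_scope.

Lemma sum_subset0 (R : nmodType) (F : {set T} -> R) :
  \sum_(Y : {set T} | Y \subset set0) F Y = F set0.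
Proof. by rewrite (eq_bigl (pred1 set0)) ?big_pred1_eq // => Y; apply: subset0. Qed.

Lemma sum_subsetU1 (R : nmodType) (F : {set T} -> R) x S : x \notin S ->
  \sum_(Y : {set T} | Y \subset x |: S) F Y =
  \sum_(Y : {set T} | Y \subset S) F Y + \sum_(Y : {set T} | Y \subset S) F (x |: Y).
Proof.
move=> xS; rewrite (bigID (fun Y => x \in Y)) /= addrC; congr (_ + _).
  apply: eq_bigl => Y; apply/andP/idP => [[/subsetP YxS xY]|/subsetP YS].
    apply/subsetP => y yY; move: (YxS y yY); rewrite in_setU1.
    by case/predU1P => // Ey; rewrite -Ey yY in xY.
  split; first by apply/subsetP => y /YS; rewrite in_setU1 => ->; rewrite orbT.
  by apply/negP => /YS; rewrite (negbTE xS).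
rewrite (reindex_onto (fun Y => x |: Y) (fun Y => Y :\ x)) /=; last first.
  by move=> Y /andP[_ xY]; rewrite setD1K.
apply: eq_bigl => Y; rewrite setU11 andbT.
apply/andP/idP => [[/subsetP YxS /eqP E]|/subsetP YS].
  apply/subsetP => y yY; have yx : y != x by move: yY; rewrite -E in_setD1 => /andP[].
  by have := YxS y (setU1r x yY); rewrite in_setU1 (negbTE yx).
have xY : x \notin Y by apply/negP => /YS; rewrite (negbTE xS).
split; last by rewrite setU1K.
by apply/subsetP => y; rewrite !in_setU1 => /predU1P[->|/YS ->]; rewrite ?eqxx ?orbT.
Qed.

Lemma sum_subsetU_mul (R : pzSemiRingType) (G H : {set T} -> R) S B :
  [disjoint S & B] ->
  \sum_(Y : {set T} | Y \subset S :|: B) G (Y :&: S) * H (Y :&: B) =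
  (\sum_(Y : {set T} | Y \subset S) G Y) * (\sum_(Y : {set T} | Y \subset B) H Y).
Proof.
elim/setU1_ind: B H => [|x B xB IH] H dSB.
  rewrite setU0 sum_subset0 big_distrl /=; apply: eq_bigr => Y YS.
  by rewrite setI0 (setIidPl YS).
have xS : x \notin S by apply: contraL dSB => xS; apply/pred0Pn; exists x; rewrite /= xS setU11.
have dSB' : [disjoint S & B] by apply: disjointWr dSB; apply: subsetUr.
have xSB : x \notin S :|: B by rewrite in_setU negb_or xS.
rewrite setUCA (sum_subsetU1 _ xSB) (sum_subsetU1 _ xB).
rewrite mulrDr -(IH _ dSB') -(IH (fun Y => H (x |: Y)) dSB').
congr (_ + _); apply: eq_bigr => Y YSB.
  have xY : x \notin Y by apply: contra xSB; apply/subsetP.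
  congr (_ * H _); apply/setP => y; rewrite !inE.
  by case: (eqVneq y x) => [->|yx] /=; rewrite ?(negbTE xY).
congr (G _ * H _); apply/setP => y; rewrite !inE;
  by case: (eqVneq y x) => [->|yx] /=; rewrite ?(negbTE xS) ?andbF.
Qed.

End SubsetSums.

(* [clique_sum k s] is the sum of (-1)^C(#|W| + s, 2) over the subsets W of a
   k-set; see sum_sign_clique. *)
Fixpoint clique_sum (k s : nat) : int :=
  if k is k'.+1 then (clique_sum k' s + clique_sum k' s.+1)%R else (-1) ^+ 'C(s, 2).

Section Cliques.
Variable A : finType.
Implicit Types (p : pr A) (U V W B : {set A}).

Lemma ncrossU p U V : [disjoint U & V] ->
  {in U & V, forall a b, ~~ crosses p a b} -> ncross p (U :|: V) = ncross p U + ncross p V.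
Proof.
move=> dUV noUV.
have sumU (F : A -> nat) : \sum_(i in U :|: V) F i = \sum_(i in U) F i + \sum_(i in V) F i.
  by rewrite -bigU //; apply: eq_bigl => i; rewrite inE.
have no_crossing a b : a \in U -> b \in V -> crossing p a b = false /\ crossing p b a = false.
  by move=> aU bV; have /norP[/negbTE -> /negbTE ->] := noUV a b aU bV.
rewrite /ncross sumU (eq_bigr (fun a => \sum_(b in U) crossing p a b)); last first.
  move=> a aU; rewrite sumU [X in _ + X]big1 ?addn0 // => b bV.
  by have [-> _] := no_crossing a b aU bV.
congr (_ + _); apply: eq_bigr => b bV; rewrite sumU big1 ?add0n // => a aU.
by have [_ ->] := no_crossing a b aU bV.
Qed.

Lemma ncross_clique p W : {in W &, forall a b, a != b -> crosses p a b} ->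
  ncross p W = 'C(#|W|, 2).
Proof.
elim/setU1_ind: W => [|z W zW IH] clique; first by rewrite ncross0 cards0.
rewrite ncrossU1 // IH; last first.
  by move=> a b aW bW; apply: clique; rewrite in_setU1 ?aW ?bW orbT.
rewrite (eq_bigr (fun _ => 1)); last first.
  move=> b bW; rewrite clique ?setU11 // ?in_setU1 ?bW ?orbT //.
  by apply: contraNneq zW => ->.
by rewrite sum_nat_const muln1 cardsU1 zW add1n binS bin1 addnC.
Qed.

Lemma sum_sign_clique B s :
  (\sum_(W : {set A} | W \subset B) (-1) ^+ 'C(#|W| + s, 2) = clique_sum #|B| s)%R.
Proof.
elim/setU1_ind: B s => [|z B zB IH] s; first by rewrite sum_subset0 cards0.
rewrite sum_subsetU1 // cardsU1 zB add1n /= -!IH; congr (_ + _)%R.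
apply: eq_bigr => W WB; have zW : z \notin W by apply: contra zB; apply/subsetP.
by rewrite cardsU1 zW add1n addSnnS.
Qed.

End Cliques.

Section StandardPairs.
Variable A : finType.
Variable p : pr A.
Hypothesis pair_p : is_pair p.
Local Notation n := (nA A).

Lemma crosses_extreme a b : (p.1 a = 1 /\ p.2 a = n) \/ (p.1 a = n /\ p.2 a = 1) ->
  b != a -> crosses p a b.
Proof.
have [[i1 r1] [i2 r2]] := pair_p => extreme ba.
have : p.1 b != p.1 a by rewrite (inj_eq i1).
have : p.2 b != p.2 a by rewrite (inj_eq i2).
have := r1 b; have := r2 b; rewrite /crosses /crossing; lia.
Qed.

Lemma ncrossU1_crosses z (Y : {set A}) : z \notin Y -> {in Y, forall b, crosses p z b} ->
  ncross p (z |: Y) = ncross p Y + #|Y|.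
Proof.
move=> zY zY_crosses; rewrite ncrossU1 // (eq_bigr (fun _ => 1)) ?sum1_card //.
by move=> b /zY_crosses ->.
Qed.

Lemma arf_standard : 2 <= n -> standard p ->
  (arf p = - 2 * \sum_(Y : {set A} | Y \subset [set a | 2 <= p.1 a < n]%N) (-1) ^+ ncross p Y)%R.
Proof.
move=> n2 [[a [top_a bot_a]] [b [bot_b top_b]]].
have [[i1 r1] _] := pair_p.
set M := [set a | _].
have cross_a c : c != a -> crosses p a c by apply: crosses_extreme; left.
have cross_b c : c != b -> crosses p b c by apply: crosses_extreme; right.
have ab : a != b by apply/eqP => E; move: top_a; rewrite E top_b; lia.
have ET : [set: A] = a |: (b |: M).
  apply/setP => c; rewrite !inE.
  case: (eqVneq c a) => // ca; case: (eqVneq c b) => //= cb.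
  have : p.1 c != p.1 a by rewrite (inj_eq i1).
  have : p.1 c != p.1 b by rewrite (inj_eq i1).
  have := r1 c; rewrite top_a top_b; lia.
have aM : a \notin b |: M by rewrite !inE negb_or ab top_a.
have bM : b \notin M by rewrite inE top_b; lia.
have -> : arf p = (\sum_(X : {set A} | X \subset a |: (b |: M)) (-1) ^+ (#|X| + ncross p X))%R.
  by rewrite -ET; apply: eq_bigl => X; rewrite subsetT.
rewrite (sum_subsetU1 _ aM) !(sum_subsetU1 _ bM) mulr_sumr -!big_split /=.
apply: eq_bigr => Y YM.
have aY : a \notin Y by apply: contra aM => aY; rewrite in_setU1 (subsetP YM _ aY) orbT.
have bY : b \notin Y by apply: contra bM; apply: (subsetP YM).
have abY : a \notin b |: Y by rewrite in_setU1 negb_or ab aY.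
have cross_in c (Y' : {set A}) : (forall d, d != c -> crosses p c d) ->
    c \notin Y' -> {in Y', forall d, crosses p c d}.
  by move=> c_crosses cY' d dY'; apply: c_crosses; apply: contraNneq cY' => <-.
have := cross_in _ _ cross_a aY; have := cross_in _ _ cross_a abY.
have := cross_in _ _ cross_b bY => ? ? ?.
rewrite !ncrossU1_crosses // !cardsU1 abY bY aY.
set y := #|Y|; set c := ncross p Y.
have sign_even m k : ((-1) ^+ (m + k.*2) = (-1) ^+ m :> int)%R.
  by rewrite exprD -mul2n exprM sqrrN !expr1n mulr1.
rewrite (_ : true + y + (c + y) = c.+1 + y.*2)%N; last lia.
rewrite (_ : true + (true + y) + (c + y + (true + y)) = (y + c).+1 + y.+1.*2)%N; last lia.
rewrite !sign_even !exprS; ring.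
Qed.

End StandardPairs.

Lemma card_bij_interval (A : finType) (f : A -> nat) lo d : is_bij f -> 1 <= lo ->
  lo + d <= (nA A).+1 -> #|[set a | lo <= f a < lo + d]| = d.
Proof.
move=> f_bij lo1; elim: d => [|d IH] lo_d.
  by rewrite (_ : [set a | _] = set0) ?cards0 //; apply/setP => a; rewrite !inE; lia.
have [a0 fa0] := is_bij_surj f_bij (k := lo + d) ltac:(lia).
have -> : [set a | lo <= f a < lo + d.+1] = a0 |: [set a | lo <= f a < lo + d].
  apply/setP => a; rewrite !inE; case: (eqVneq a a0) => [->|aa0]; first by rewrite fa0; lia.
  have : f a != f a0 by rewrite (inj_eq f_bij.1).
  by rewrite fa0 /=; lia.
rewrite cardsU1 IH; last lia.
by rewrite inE fa0; lia.
Qed.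

Section PieceWiseOrderReversing.
Variable A : finType.
Variables (p : pr A) (ks : seq nat).
Hypotheses (pair_p : is_pair p) (pwor_p : pwor_wrt p ks).

Local Notation n := (nA A).
Local Notation J := (size ks).-1.
Local Notation k j := (nth 0 ks j).

Definition block j := [set a | k j <= p.1 a < k j.+1].
Definition below j := [set a | 2 <= p.1 a < k j].

Lemma pwor_size : 0 < size ks.
Proof. by case: pwor_p; case: ks. Qed.

Lemma pwor_first : k 0 = 2.
Proof. by case: pwor_p; case: ks. Qed.

Lemma pwor_last : k J = n.
Proof. by case: pwor_p => _ <- _ _; rewrite nth_last. Qed.

Lemma pwor_mono i j : i < j <= J -> k i < k j.
Proof.
move=> ij; case: pwor_p => _ _ sorted_ks _; have := pwor_size.
by move=> ks0; apply: (sorted_ltn_nth ltn_trans 0 sorted_ks); rewrite ?inE; lia.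
Qed.

Lemma pwor_le i j : i <= j <= J -> k i <= k j.
Proof.
by case: (ltngtP i j) => [ij jJ|//|-> //]; apply/ltnW/pwor_mono; rewrite ij.
Qed.

Lemma pwor_range j : j <= J -> 2 <= k j <= n.
Proof.
by move=> jJ; rewrite -pwor_first -pwor_last !pwor_le // jJ leqnn.
Qed.

Lemma pwor_block j a : j < J ->
  (k j <= p.1 a < k j.+1) = (k j <= p.2 a < k j.+1) /\
  (k j <= p.1 a < k j.+1 -> p.1 a + p.2 a = k j + k j.+1 - 1).
Proof. by case: pwor_p => _ _ _ blocks jJ; apply: blocks; lia. Qed.

Lemma below_snd j a : j <= J -> a \in below j -> 2 <= p.2 a < k j.
Proof.
elim: j => [|j IH] jJ; rewrite !inE; first by rewrite pwor_first; lia.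
have := pwor_mono (i := j) (j := j.+1) ltac:(lia).
case: (ltnP (p.1 a) (k j)) => a_j a_j1 a_below.
  by have := IH ltac:(lia); rewrite inE => /(_ ltac:(lia)); lia.
have [+ _] := pwor_block a (j := j) ltac:(lia).
have := pwor_range (j := j) ltac:(lia); lia.
Qed.

Lemma belowS j : j < J -> below j.+1 = below j :|: block j.
Proof.
move=> jJ; apply/setP => a; rewrite !inE.
have := pwor_range (j := j) ltac:(lia); have := pwor_mono (i := j) (j := j.+1) ltac:(lia).
lia.
Qed.

Lemma below_block_disjoint j : [disjoint below j & block j].
Proof. by apply/pred0P => a /=; rewrite !inE; lia. Qed.

Lemma below_block_no_crossing j :
  j < J -> {in below j & block j, forall a b, ~~ crosses p a b}.
Proof.
move=> jJ a b a_below; have := below_snd (ltnW jJ) a_below.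
have [+ _] := pwor_block b jJ; move: a_below; rewrite !inE /crosses /crossing.
lia.
Qed.

Lemma block_clique j : j < J -> {in block j &, forall a b, a != b -> crosses p a b}.
Proof.
move=> jJ a b; rewrite !inE => a_j b_j ab.
have [_ /(_ a_j)] := pwor_block a jJ; have [_ /(_ b_j)] := pwor_block b jJ.
have : p.1 a != p.1 b by rewrite (inj_eq pair_p.1.1).
rewrite /crosses /crossing; lia.
Qed.

Lemma card_block j : j < J -> #|block j| = k j.+1 - k j.
Proof.
move=> jJ; have := pwor_mono (i := j) (j := j.+1) ltac:(lia).
have := pwor_range (j := j) ltac:(lia); have := pwor_range (j := j.+1) ltac:(lia).
move=> ? ? ?; rewrite /block (_ : k j.+1 = k j + (k j.+1 - k j)); last lia.
by rewrite card_bij_interval //; try lia; case: pair_p.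
Qed.

Lemma sum_sign_below j : j <= J ->
  (\sum_(Y : {set A} | Y \subset below j) (-1) ^+ ncross p Y =
   \prod_(0 <= i < j) clique_sum (k i.+1 - k i) 0)%R.
Proof.
elim: j => [|j IH] jJ.
  rewrite big_nil (_ : below 0 = set0) ?sum_subset0 ?ncross0 //.
  by apply/setP => a; rewrite !inE pwor_first; lia.
rewrite big_nat_recr //= -IH ?(ltnW jJ) // (belowS jJ) -(card_block jJ).
rewrite -sum_sign_clique -sum_subsetU_mul; last exact: below_block_disjoint.
apply: eq_bigr => Y Y_sub.
have EY : Y = (Y :&: below j) :|: (Y :&: block j) by rewrite -setIUr; apply/esym/setIidPl.
rewrite {1}EY ncrossU ?exprD ?addn0 ?(ncross_clique (W := Y :&: block j)) //.
- by move=> a b /setIP[_ a_j] /setIP[_ b_j]; apply: (block_clique jJ).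
- apply: (disjointWl (subsetIr Y _)); apply: (disjointWr (subsetIr Y _)).
  exact: below_block_disjoint.
- by move=> a b /setIP[_ a_j] /setIP[_ b_j]; apply: (below_block_no_crossing jJ).
Qed.

Lemma arf_pwor : 2 <= n -> standard p ->
  arf p = (- 2 * \prod_(x <- block_sizes ks) clique_sum x 0)%R.
Proof.
move=> n2 std; rewrite (arf_standard pair_p n2 std).
have -> : [set a | 2 <= p.1 a < n] = below J by rewrite /below pwor_last.
by rewrite sum_sign_below // /block_sizes big_map /index_iota subn0.
Qed.

End PieceWiseOrderReversing.

Lemma flatten_chains sz : flatten (chains sz) = [seq x <- sz | x != 1].
Proof.
elim: sz => [//|x s IH] /=; case: (eqVneq x 1) => [-> //|x1] /=.
by case E: (chains s) => [|c cs] /=; rewrite -IH E.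
Qed.

Local Open Scope ring_scope.

Lemma prod_chains (R : comPzSemiRingType) (F : nat -> R) sz :
  \prod_(x <- sz) F x =
  \prod_(x <- sz | x == 1%N) F x * \prod_(c <- chains sz) \prod_(x <- c) F x.
Proof.
rewrite (bigID (fun x => x == 1%N)) /=; congr (_ * _).
by rewrite -big_filter -flatten_chains big_flatten.
Qed.

Lemma prodr_lt0_single (R : numDomainType) (s : seq R) i : (i < size s)%N ->
  nth 0 s i < 0 -> (forall j, (j < size s)%N -> j != i -> 0 < nth 0 s j) ->
  \prod_(x <- s) x < 0.
Proof.
move=> i_s si_neg sj_pos; rewrite (big_nth 0) big_mkord (bigD1 (Ordinal i_s)) //=.
by rewrite (nmulr_rlt0 _ si_neg); apply: prodr_gt0 => j ji; apply: sj_pos.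
Qed.

Lemma prod_2blocks_gt0 c : all2blocks c -> 0 < \prod_(x <- c) clique_sum x 0.
Proof.
by move=> c2; rewrite big_seq_cond; apply: prodr_gt0 => x /andP[/(allP c2)/eqP -> _].
Qed.

Lemma prod_1blocks_gt0 sz : 0 < \prod_(x <- sz | x == 1%N) clique_sum x 0.
Proof. by apply: prodr_gt0 => x /eqP ->. Qed.

Lemma type2_prod_gt0 sz : type2_sz sz -> 0 < \prod_(x <- sz) clique_sum x 0.
Proof.
case=> _ c2; rewrite prod_chains mulr_gt0 ?prod_1blocks_gt0 // big_seq_cond.
by apply: prodr_gt0 => c /andP[/(allP c2) /prod_2blocks_gt0].
Qed.

Lemma type45_prod_lt0 sz : type4_sz sz \/ type5_sz sz -> \prod_(x <- sz) clique_sum x 0 < 0.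
Proof.
move=> T; rewrite prod_chains (pmulr_rlt0 _ (prod_1blocks_gt0 sz)) -(big_map _ xpredT id).
have [i [i_sz [c_neg others]]] : exists i, (i < size (chains sz))%N /\
    \prod_(x <- nth [::] (chains sz) i) clique_sum x 0 < 0 /\
    forall j, (j < size (chains sz))%N -> j != i ->
      0 < \prod_(x <- nth [::] (chains sz) j) clique_sum x 0.
  case: T => [[_ [i [i_sz [[m Ei] others]]]]|[_ [i [i_sz [Ei others]]]]];
    exists i; rewrite Ei.
  - do 2!split => //; last by move=> j j_sz ji; apply/prod_2blocks_gt0/others.
    rewrite big_cons (nmulr_rlt0 _ (_ : clique_sum 4 0 < 0)) //.
    by apply: prod_2blocks_gt0; apply/allP => x /nseqP[->].
  - do 2!split => //; first by rewrite big_seq1.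
    by move=> j j_sz ji; case: (others j j_sz ji) => ->; rewrite ?big_nil ?big_seq1.
by apply: (prodr_lt0_single (i := i)); rewrite ?size_map ?(nth_map [::]) // => j j_sz ji;
  rewrite (nth_map [::]) //; apply: others.
Qed.

Lemma type2_arf_lt0 (A : finType) (p : pr A) : (2 <= nA A)%N -> is_pair p -> standard p ->
  type2 p -> arf p < 0.
Proof.
move=> n2 pair_p std_p [ks [pwor_p type2_p]].
by rewrite (arf_pwor pair_p pwor_p n2 std_p) mulNr oppr_lt0 mulr_gt0 // type2_prod_gt0.
Qed.

Lemma type45_arf_gt0 (A : finType) (p : pr A) : (2 <= nA A)%N -> is_pair p -> standard p ->
  type4 p \/ type5 p -> 0 < arf p.
Proof.
move=> n2 pair_p std_p type45_p.
have [ks [pwor_p type45_sz]] : exists ks, pwor_wrt p ks /\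
    (type4_sz (block_sizes ks) \/ type5_sz (block_sizes ks)).
  by case: type45_p => -[ks [? ?]]; exists ks; [split; [|left] | split; [|right]].
rewrite (arf_pwor pair_p pwor_p n2 std_p) mulNr oppr_gt0 pmulr_rlt0 //.
exact: type45_prod_lt0.
Qed.

Local Close Scope ring_scope.

Theorem corollary4p10 (A : finType) (p q : pr A) :
  2 <= #|A| ->
  is_pair p -> standard p -> is_pair q -> standard q ->
  type2 p -> (type4 q \/ type5 q) ->
  ~ (forall s : seq nat, nl_class p s <-> nl_class q s).
Proof.
move=> n2 pair_p std_p pair_q std_q type2_p type45_q same_class.
have [r [reach_qr perm_r]] : nl_class q (perm_of p).
  by apply/same_class; exists p; split; [apply: reach_refl|].
have [[pair_r _] arf_r] := reach_irr_arf n2 (conj pair_q (standard_irreducible std_q)) reach_qr.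
have arf_p := type2_arf_lt0 n2 pair_p std_p type2_p.
have arf_q := type45_arf_gt0 n2 pair_q std_q type45_q.
rewrite -arf_r (arf_perm_of pair_p pair_r perm_r) in arf_q; lia.
Qed.
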